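(* Let $G$ be an almost well-covered $\{C_3,C_4,C_5,C_7\}$-free graph. Then every vertex $x\in V(G_0)$ satisfies $d_{G_0}(x)\leq 2$.
   Context: All graphs are finite and simple. $C_n$ is the cycle on $n$ vertices; $G$ is $\{C_3,C_4,C_5,C_7\}$-free if it has no induced subgraph isomorphic to any of these cycles. $d_{G_0}(x)$ is the degree of $x$ in $G_0$. For a graph $G$, $\alpha(G)$ is the maximum size of an independent set and $i(G)$ the minimum size of an inclusion-maximal independent set; $G$ is almost well-covered if $\alpha(G)-i(G)=1$. Types of vertices: let $U$ be the set of vertices of $G$ whose connected component is a complete graph. In $G-U$, vertices of degree $1$ are leaves and the others are internal vertices. An internal vertex adjacent to exactly $k$ leaves is of type $k$; every vertex of $U$ is of type $0$. $G_0$ denotes the subgraph of $G$ induced by all vertices of type $0$. *)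

From mathcomp Require Import all_boot.
Set Implicit Arguments. Unset Strict Implicit. Unset Printing Implicit Defensive.

Section Graphs.
Variables (T : finType) (e : rel T).

Definition simple_graph : Prop := symmetric e /\ irreflexive e.

Definition cyc_adj (n : nat) (i j : 'I_n) : bool :=
  (i.+1 %% n == j) || (j.+1 %% n == i).

Definition has_induced_cycle (n : nat) : Prop :=
  exists f : 'I_n -> T, injective f /\ forall i j, e (f i) (f j) = cyc_adj i j.

Definition C3457_free : Prop :=
  ~ has_induced_cycle 3 /\ ~ has_induced_cycle 4 /\
  ~ has_induced_cycle 5 /\ ~ has_induced_cycle 7.

Definition independent (S : {set T}) : bool :=
  [forall x in S, forall y in S, ~~ e x y].

Definition maximal_independent (S : {set T}) : bool :=
  independent S && [forall v, (v \notin S) ==> ~~ independent (v |: S)].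

Definition alpha : nat := \max_(S : {set T} | independent S) #|S|.
Definition indep_dom : nat :=
  \big[minn/#|T|]_(S : {set T} | maximal_independent S) #|S|.

Definition almost_well_covered : Prop := alpha - indep_dom = 1.

Definition component (x : T) : {set T} := [set y | connect e x y].

Definition U : {set T} :=
  [set x | [forall y in component x, forall z in component x,
             (y != z) ==> e y z]].

Definition deg_GU (v : T) : nat := #|[set w | e v w & w \notin U]|.

Definition leaf (v : T) : bool := (v \notin U) && (deg_GU v == 1).
Definition internal (v : T) : bool := (v \notin U) && (deg_GU v != 1).

Definition nleaves (v : T) : nat := #|[set w | e v w & leaf w]|.

Definition has_type (k : nat) (v : T) : bool :=
  (v \in U) && (k == 0) || internal v && (nleaves v == k).

Definition V0 : {set T} := [set v | has_type 0 v].

Definition deg_G0 (x : T) : nat := #|[set y in V0 | e x y]|.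

End Graphs.

(* Let Y be the set of neighbours of x in G_0 and Z the set of the other neighbours of
   the vertices of Y. If y in Y is adjacent to z in Z, then y lies outside U and, having
   type 0, has no leaf neighbour; so z has a neighbour other than y, which lies outside
   N[x] and Z. Having no induced C_3, C_4, C_5 or C_7 makes x together with all such
   neighbours independent, and a maximal independent set B containing them avoids Z and
   Y. Exchanging x for Y in B keeps it independent, so
   alpha(G) >= |B| - 1 + |Y| >= i(G) - 1 + |Y|. *)
From HB Require Import structures.
From mathcomp Require Import all_boot zify.
Set Implicit Arguments. Unset Strict Implicit. Unset Printing Implicit Defensive.

(* Makes [bigD1] available for the [minn]-fold defining [indep_dom]. *)
HB.instance Definition _ := SemiGroup.isComLaw.Build nat minn minnA minnC.

Section IndependentSets.
Variables (T : finType) (e : rel T).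

Lemma independentP (S : {set T}) :
  reflect {in S &, forall u v, ~~ e u v} (independent e S).
Proof.
apply: (iffP forallP) => [indS u v uS vS | indS u].
  by move: (indS u); rewrite uS => /forallP/(_ v); rewrite vS.
by apply/implyP => uS; apply/forallP => v; apply/implyP; apply: indS.
Qed.

Lemma leq_card_alpha (S : {set T}) : independent e S -> #|S| <= alpha e.
Proof. exact: leq_bigmax_cond. Qed.

Lemma indep_dom_leq_card (S : {set T}) :
  maximal_independent e S -> indep_dom e <= #|S|.
Proof. by move=> maxS; rewrite /indep_dom (bigD1 S) //= geq_minl. Qed.

Lemma maximal_independent_superset (S : {set T}) :
  independent e S -> exists2 B, maximal_independent e B & S \subset B.
Proof.
move=> indS; have [B /maxsetP[indB maxB] SB] := maxset_exists indS.
exists B => //; rewrite /maximal_independent indB /=.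
apply/forallP => v; apply/implyP => vB; apply/negP => indvB.
by move: vB; rewrite -(maxB _ indvB (subsetUr _ _)) setU11.
Qed.

End IndependentSets.

Section VertexTypes.
Variables (T : finType) (e : rel T).

Lemma nonadjacent_pair_notin_U (v a c : T) :
  connect e v a -> connect e v c -> a != c -> ~~ e a c -> v \notin U e.
Proof.
move=> va vc ac nac; apply/negP; rewrite inE => /forall_inP/(_ a).
rewrite inE => /(_ va)/forall_inP/(_ c); rewrite inE => /(_ vc)/implyP/(_ ac).
by rewrite (negbTE nac).
Qed.

Lemma V0_nbr_not_leaf (y z : T) :
  y \in V0 e -> y \notin U e -> e y z -> ~~ leaf e z.
Proof.
move=> + yU yz; rewrite inE /has_type (negbTE yU) /= => /andP[_ /eqP no_leaves].
by apply/negP => lz; move/eqP: no_leaves; rewrite /nleaves (cardD1 z) inE yz lz.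
Qed.

Lemma non_leaf_other_nbr (z y : T) :
  z \notin U e -> ~~ leaf e z -> e z y -> y \notin U e -> exists2 w, e z w & w != y.
Proof.
rewrite /leaf => zU; rewrite zU /= => deg_ne1 zy yU.
have : 1 < deg_GU e z.
  by rewrite ltn_neqAle eq_sym deg_ne1 /=; apply/card_gt0P; exists y; rewrite inE zy.
case/card_gt1P => u [v [uN vN uv]]; move: uN vN; rewrite !inE => /andP[zu _] /andP[zv _].
by have [uy|] := eqVneq u y; [exists v; rewrite // -uy eq_sym | exists u].
Qed.

End VertexTypes.

Section C3457FreeGraphs.
Variables (T : finType) (e : rel T).
Hypotheses (e_sym : symmetric e) (e_irr : irreflexive e).
Hypotheses (noC3 : ~ has_induced_cycle e 3) (noC4 : ~ has_induced_cycle e 4).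
Hypotheses (noC5 : ~ has_induced_cycle e 5) (noC7 : ~ has_induced_cycle e 7).

Lemma induced_cycle_of_seq (a : T) (s : seq T) : uniq (a :: s) ->
  (forall i j : 'I_(size s).+1, e (nth a (a :: s) i) (nth a (a :: s) j) = cyc_adj i j) ->
  has_induced_cycle e (size s).+1.
Proof.
move=> s_uniq s_adj; exists (fun i => nth a (a :: s) i); split=> // i j /eqP.
by rewrite nth_uniq // => /eqP; apply: val_inj.
Qed.

(* [induced_cycle a s] shows that [a :: s] is an induced cycle, reading the distinctness
   of its vertices and its adjacency table off the (non-)adjacencies in the context. *)
Ltac clash := match goal with
  | H : is_true (e ?p ?p) |- _ => by rewrite e_irr in H
  | H : is_true (?p != ?p) |- _ => by rewrite eqxx in H
  | H : is_true (e ?p ?q), H' : is_true (~~ e ?p ?q) |- _ => by rewrite H in H'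
  | H : is_true (e ?p ?q), H' : is_true (~~ e ?q ?p) |- _ => by rewrite e_sym H in H'
  end.

Ltac induced_cycle a s :=
  apply: (@induced_cycle_of_seq a s);
  [ rewrite /= !inE ?negb_or; repeat (apply/andP; split);
    apply/negP => /eqP eq_pq; subst; clash
  | by case=> [[|[|[|[|[|[|[|?]]]]]]] ?] [[|[|[|[|[|[|[|?]]]]]]] ?] //;
       rewrite /cyc_adj /=;
       first [ done | by rewrite e_irr | by rewrite e_sym
             | by apply/negbTE | by rewrite e_sym; apply/negbTE ] ].

Lemma no_triangle (a b c : T) : e a b -> e b c -> ~~ e a c.
Proof. move=> ab bc; apply/negP => ac; apply: noC3; induced_cycle a [:: b; c]. Qed.

Lemma common_nbr_uniq (a b c d : T) :
  a != b -> e a c -> e b c -> e a d -> e b d -> c = d.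
Proof.
move=> ab_ne ac bc ad bd; apply/eqP/negPn/negP => cd_ne.
have nab : ~~ e a b by rewrite e_sym; apply: no_triangle bc _; rewrite e_sym.
have ncd : ~~ e c d by apply: no_triangle ad; rewrite e_sym.
apply: noC4; induced_cycle a [:: c; b; d].
Qed.

Lemma no_induced_C5 (a b c d f : T) :
  e a b -> e b c -> e c d -> e d f -> e f a ->
  ~~ e a c -> ~~ e a d -> ~~ e b d -> ~~ e b f -> ~~ e c f -> False.
Proof.
move=> ab bc cd df fa ac ad bd bf cf; apply: noC5; induced_cycle a [:: b; c; d; f].
Qed.

Lemma no_induced_C7 (a b c d f g h : T) :
  e a b -> e b c -> e c d -> e d f -> e f g -> e g h -> e h a ->
  ~~ e a c -> ~~ e a d -> ~~ e a f -> ~~ e a g ->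
  ~~ e b d -> ~~ e b f -> ~~ e b g -> ~~ e b h ->
  ~~ e c f -> ~~ e c g -> ~~ e c h ->
  ~~ e d g -> ~~ e d h -> ~~ e f h -> False.
Proof.
move=> ab bc cd df fg gh ha ac ad af ag bd bf bg bh cf cg ch dg dh fh.
apply: noC7; induced_cycle a [:: b; c; d; f; g; h].
Qed.

Variable x : T.

Let Y := [set y in V0 e | e x y].
Let Z := [set z | (z != x) && [exists y in Y, e y z]].
Let W := [set w | [&& w != x, ~~ e x w, w \notin Z & [exists z in Z, e z w]]].

Lemma YP y : y \in Y -> y \in V0 e /\ e x y.
Proof. by rewrite inE => /andP. Qed.

Lemma ZP z : z \in Z -> z != x /\ exists2 y, y \in Y & e y z.
Proof. by rewrite inE => /andP[zx /exists_inP[y yY yz]]; split=> //; exists y. Qed.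

Lemma WP w : w \in W ->
  [/\ w != x, ~~ e x w, w \notin Z & exists2 z, z \in Z & e z w].
Proof. by rewrite inE => /and4P[wx xw wZ /exists_inP[z zZ zw]]; split=> //; exists z. Qed.

Lemma Y_nonadj : {in Y &, forall y y', ~~ e y y'}.
Proof.
move=> y y' /YP[_ xy] /YP[_ xy']; rewrite e_sym in xy.
exact: no_triangle xy xy'.
Qed.

Lemma Z_nonadj_x z : z \in Z -> ~~ e x z.
Proof. by case/ZP=> _ [y /YP[_ xy] yz]; apply: no_triangle xy yz. Qed.

Lemma Z_Y_nbr_uniq z y y' :
  z \in Z -> y \in Y -> y' \in Y -> e y z -> e y' z -> y = y'.
Proof.
move=> /ZP[zx _] /YP[_ xy] /YP[_ xy'] yz y'z.
by apply: (common_nbr_uniq (b := z) _ xy _ xy'); rewrite 1?eq_sym // e_sym.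
Qed.

Lemma Z_nonadj_other_Y z y y' :
  z \in Z -> y \in Y -> y' \in Y -> e y' z -> y != y' -> ~~ e y z.
Proof.
by move=> zZ yY y'Y y'z; apply: contraNN => yz; rewrite (Z_Y_nbr_uniq zZ yY y'Y).
Qed.

Lemma Z_nonadj : {in Z &, forall z z', ~~ e z z'}.
Proof.
move=> z z' zZ z'Z; apply/negP => zz'.
have [_ [y yY yz]] := ZP zZ; have [_ [y' y'Y y'z']] := ZP z'Z.
have [eq_yy'|yy'] := eqVneq y y'.
  by subst y'; move: (no_triangle yz zz'); rewrite y'z'.
have [_ xy] := YP yY; have [_ xy'] := YP y'Y.
apply: (no_induced_C5 xy yz zz' _ _ (Z_nonadj_x zZ) (Z_nonadj_x z'Z)
          (Z_nonadj_other_Y z'Z yY y'Y y'z' yy') (Y_nonadj yY y'Y)); rewrite e_sym //.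
by apply: (Z_nonadj_other_Y zZ y'Y yY yz); rewrite eq_sym.
Qed.

Lemma Z_W_nbr z : z \in Z -> exists2 w, w \in W & e z w.
Proof.
move=> zZ; have [zx [y yY yz]] := ZP zZ; have [yV0 xy] := YP yY.
have xz := Z_nonadj_x zZ.
have zy : e z y by rewrite e_sym.
have yx : e y x by rewrite e_sym.
have yU : y \notin U e.
  by apply: (nonadjacent_pair_notin_U (connect1 yx) (connect1 yz)); rewrite // eq_sym.
have zU : z \notin U e.
  apply: (nonadjacent_pair_notin_U (a := x) (connect_trans (connect1 zy) (connect1 yx)))
    (connect0 _ z) _ xz; by rewrite eq_sym.
have [w zw wy] := non_leaf_other_nbr zU (V0_nbr_not_leaf yV0 yU yz) zy yU.
exists w => //; rewrite inE; apply/and4P; split.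
- by apply: contraNneq xz => <-; rewrite e_sym.
- apply/negP => xw; move: wy; rewrite (common_nbr_uniq _ xw _ xy zy) ?eqxx //.
  by rewrite eq_sym.
- by apply/negP => wZ; move: (Z_nonadj zZ wZ); rewrite zw.
- by apply/exists_inP; exists z.
Qed.

Lemma Y_W_nonadj y w : y \in Y -> w \in W -> ~~ e y w.
Proof.
move=> yY /WP[wx _ wZ _]; apply: contra wZ => yw.
by rewrite inE wx; apply/exists_inP; exists y.
Qed.

Lemma W_nonadj : {in W &, forall w w', ~~ e w w'}.
Proof.
move=> w w' wW w'W; apply/negP => ww'.
have [_ xw _ [z zZ zw]] := WP wW; have [_ xw' _ [z' z'Z z'w']] := WP w'W.
have [eq_zz'|zz'] := eqVneq z z'.
  by subst z'; move: (no_triangle zw ww'); rewrite z'w'.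
have [_ [y yY yz]] := ZP zZ; have [_ [y' y'Y y'z']] := ZP z'Z.
have zw'F : ~~ e z w' := no_triangle zw ww'.
have wz'F : ~~ e w z' by rewrite e_sym; apply: no_triangle z'w' _; rewrite e_sym.
have w'z' : e w' z' by rewrite e_sym.
have z'y' : e z' y' by rewrite e_sym.
have [eq_yy'|yy'] := eqVneq y y'.
  subst y'; apply: (no_induced_C5 yz zw ww' w'z' z'y' (Y_W_nonadj yY wW)
                      (Y_W_nonadj yY w'W) zw'F (Z_nonadj zZ z'Z) wz'F).
have zy'F : ~~ e z y'.
  by rewrite e_sym; apply: (Z_nonadj_other_Y zZ y'Y yY yz); rewrite eq_sym.
have [_ xy] := YP yY; have [_ xy'] := YP y'Y.
apply: (no_induced_C7 xy yz zw ww' w'z' z'y' _ (Z_nonadj_x zZ) xw xw' (Z_nonadj_x z'Z)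
          (Y_W_nonadj yY wW) (Y_W_nonadj yY w'W) (Z_nonadj_other_Y z'Z yY y'Y y'z' yy')
          (Y_nonadj yY y'Y) zw'F (Z_nonadj zZ z'Z) zy'F wz'F _ _);
  by rewrite e_sym // Y_W_nonadj.
Qed.

Lemma independent_setU1_W : independent e (x |: W).
Proof.
apply/independentP => u v; rewrite !in_setU1.
move=> /predU1P[->|uW] /predU1P[->|vW]; first by rewrite e_irr.
- by have [] := WP vW.
- by have [_ xu _ _] := WP uW; rewrite e_sym.
- exact: W_nonadj.
Qed.

Lemma independent_exchange (B : {set T}) :
  independent e B -> x \in B -> [disjoint B & Z] -> independent e (Y :|: B :\ x).
Proof.
move=> /independentP indB xB BZ; apply/independentP.
have Y_B : {in Y & B :\ x, forall y b, ~~ e y b}.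
  move=> y b yY; rewrite in_setD1 => /andP[bx bB]; apply: contraFN (disjointFr BZ bB) => yb.
  by rewrite inE bx; apply/exists_inP; exists y.
move=> u v /setUP[uN|uB] /setUP[vN|vB].
- exact: Y_nonadj.
- exact: Y_B.
- by rewrite e_sym; apply: Y_B.
- by apply: indB; [move: uB | move: vB]; rewrite in_setD1 => /andP[].
Qed.

Lemma maximal_independent_deg_G0 :
  exists2 B, maximal_independent e B & #|B| + deg_G0 e x <= (alpha e).+1.
Proof.
have [B maxB xWB] := maximal_independent_superset independent_setU1_W.
have indB : independent e B by case/andP: maxB.
have xB : x \in B by apply: (subsetP xWB); apply: setU11.
have BZ : [disjoint B & Z].
  apply/pred0P => z /=; apply/negP => /andP[zB zZ]; have [w wW zw] := Z_W_nbr zZ.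
  have wB : w \in B by apply: (subsetP xWB); apply: setU1r.
  by move/independentP: indB => /(_ z w zB wB); rewrite zw.
have YB : [disjoint Y & B :\ x].
  apply/pred0P => y /=; apply/negP => /andP[yY].
  rewrite in_setD1 => /andP[_ yB]; have [_ xy] := YP yY.
  by move/independentP: indB => /(_ x y xB yB); rewrite xy.
exists B => //; have := leq_card_alpha (independent_exchange indB xB BZ).
by rewrite cardsU (disjoint_setI0 YB) cards0 (cardsD1 x B) xB /deg_G0 -/Y; lia.
Qed.

End C3457FreeGraphs.

Theorem lemma19 (T : finType) (e : rel T) :
  simple_graph e -> almost_well_covered e -> C3457_free e ->
  forall x : T, x \in V0 e -> deg_G0 e x <= 2.
Proof.
move=> [e_sym e_irr] awc [noC3 [noC4 [noC5 noC7]]] x _.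
have [B maxB] := maximal_independent_deg_G0 e_sym e_irr noC3 noC4 noC5 noC7 x.
by move: awc (indep_dom_leq_card maxB); rewrite /almost_well_covered; lia.
Qed.
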